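(* Let $(\mathcal R,\Sigma,\Delta)$ be a right triangulated category with right semi-equivalence. Suppose $\mathcal R$ is idempotent complete and additively finite (finitely many isomorphism classes of indecomposable objects, every object a finite direct sum of indecomposables). Then $\Sigma$ is an autoequivalence of $\mathcal R$; in particular $(\mathcal R,\Sigma,\Delta)$ is a triangulated category.
   Context: A right triangulated category $(\mathcal R,\Sigma,\Delta)$: additive category $\mathcal R$, additive endofunctor $\Sigma$, class $\Delta$ of right triangles $A\to B\to C\to\Sigma A$ satisfying the axioms of a triangulated category except that $\Sigma$ need not be an equivalence and only rotation to the right ($B\xrightarrow{y}C\xrightarrow{z}\Sigma A\xrightarrow{-\Sigma x}\Sigma B$) is required. $\Sigma$ is a right semi-equivalence if it is fully faithful and its essential image $\Sigma\mathcal R$ is closed under extensions (for every right triangle $A\to B\to C\to\Sigma A$ with $A,C\in\Sigma\mathcal R$ also $B\in\Sigma\mathcal R$). *)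

From HB Require Import structures.
From mathcomp Require Import all_boot all_algebra.
From Stdlib Require List.
Set Implicit Arguments. Unset Strict Implicit. Unset Printing Implicit Defensive.
Import GRing.Theory.
Local Open Scope ring_scope.

Record PreaddCat := {
  Obj :> Type;
  Hom : Obj -> Obj -> zmodType;
  idm : forall A, Hom A A;
  comp : forall A B C, Hom B C -> Hom A B -> Hom A C; (* comp g f = g o f *)
  compA : forall A B C D (h : Hom C D) (g : Hom B C) (f : Hom A B),
      comp h (comp g f) = comp (comp h g) f;
  comp1m : forall A B (f : Hom A B), comp (idm B) f = f;
  compm1 : forall A B (f : Hom A B), comp f (idm A) = f;
  compDl : forall A B C (g g' : Hom B C) (f : Hom A B),
      comp (g + g') f = comp g f + comp g' f;
  compDr : forall A B C (g : Hom B C) (f f' : Hom A B),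
      comp g (f + f') = comp g f + comp g f'
}.
Arguments idm {p} A.
Arguments comp {p A B C}.
Arguments Hom {p}.

Section Defs.
Variable C : PreaddCat.

Definition IsZero (Z : C) : Prop := forall f : Hom Z Z, f = 0.

Definition IsIso (A B : C) (f : Hom A B) : Prop :=
  exists g : Hom B A, comp g f = idm A /\ comp f g = idm B.

Definition Isomorphic (A B : C) : Prop := exists f : Hom A B, IsIso f.

Definition IsBiprod (A B D : C) (p1 : Hom A B) (p2 : Hom A D)
  (i1 : Hom B A) (i2 : Hom D A) : Prop :=
  [/\ comp p1 i1 = idm B, comp p2 i2 = idm D, comp p1 i2 = 0,
      comp p2 i1 = 0 & comp i1 p1 + comp i2 p2 = idm A].

Definition IsAdditive : Prop :=
  (exists Z : C, IsZero Z) /\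
  (forall B D : C, exists (A : C) (p1 : Hom A B) (p2 : Hom A D)
     (i1 : Hom B A) (i2 : Hom D A), IsBiprod p1 p2 i1 i2).

Definition IdempotentComplete : Prop :=
  forall (A : C) (e : Hom A A), comp e e = e ->
    exists (B : C) (r : Hom A B) (s : Hom B A),
      comp r s = idm B /\ comp s r = e.

Definition Indecomposable (A : C) : Prop :=
  ~ IsZero A /\
  forall (B D : C) (p1 : Hom A B) (p2 : Hom A D) (i1 : Hom B A) (i2 : Hom D A),
    IsBiprod p1 p2 i1 i2 -> IsZero B \/ IsZero D.

Fixpoint IsDirectSum (l : seq C) (A : C) : Prop :=
  match l with
  | [::] => IsZero A
  | X :: l' => exists (B : C) (p1 : Hom A X) (p2 : Hom A B)
                 (i1 : Hom X A) (i2 : Hom B A),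
                 IsBiprod p1 p2 i1 i2 /\ IsDirectSum l' B
  end.

Definition AdditivelyFinite : Prop :=
  (exists l : seq C, forall A : C, Indecomposable A ->
       exists2 X, List.In X l & Isomorphic A X) /\
  (forall A : C, exists l : seq C,
       (forall X, List.In X l -> Indecomposable X) /\ IsDirectSum l A).

End Defs.

Record AddEndo (C : PreaddCat) := {
  FO :> C -> C;
  FH : forall A B : C, Hom A B -> Hom (FO A) (FO B);
  FH_id : forall A, FH (idm A) = idm (FO A);
  FH_comp : forall A B D (g : Hom B D) (f : Hom A B),
      FH (comp g f) = comp (FH g) (FH f);
  FH_add : forall A B (f f' : Hom A B), FH (f + f') = FH f + FH f'
}.
Arguments FH {C} a {A B}.

Record Tri (C : PreaddCat) (S : AddEndo C) := MkTri {
  tA : C; tB : C; tC : C;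
  tf : Hom tA tB; tg : Hom tB tC; th : Hom tC (S tA)
}.
Arguments MkTri {C S tA tB tC}.

Section Triangulated.
Variables (C : PreaddCat) (S : AddEndo C) (D : Tri S -> Prop).

Definition TriMorph (T T' : Tri S) (a : Hom (tA T) (tA T'))
  (b : Hom (tB T) (tB T')) (c : Hom (tC T) (tC T')) : Prop :=
  [/\ comp b (tf T) = comp (tf T') a,
      comp c (tg T) = comp (tg T') b &
      comp (FH S a) (th T) = comp (th T') c].

Definition TriIsomorphic (T T' : Tri S) : Prop :=
  exists (a : Hom (tA T) (tA T')) (b : Hom (tB T) (tB T'))
    (c : Hom (tC T) (tC T')), TriMorph a b c /\ IsIso a /\ IsIso b /\ IsIso c.

Definition RightTriangulated : Prop :=
  (
      (forall T T', TriIsomorphic T T' -> D T -> D T')) /\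
      (forall (A Z : C), IsZero Z ->
         D (MkTri (idm A) (0 : Hom A Z) (0 : Hom Z (S A)))) /\
      (forall (A B : C) (f : Hom A B), exists (X : C) (g : Hom B X)
         (h : Hom X (S A)), D (MkTri f g h)) /\
      (forall T, D T -> D (MkTri (tg T) (th T) (- FH S (tf T)))) /\
      (forall T T', D T -> D T' ->
         forall (a : Hom (tA T) (tA T')) (b : Hom (tB T) (tB T')),
         comp b (tf T) = comp (tf T') a ->
         exists c : Hom (tC T) (tC T'), TriMorph a b c) /\
      (forall (X Y Z : C) (f : Hom X Y) (g : Hom Y Z)
         (Z' : C) (u1 : Hom Y Z') (w1 : Hom Z' (S X))
         (X' : C) (u2 : Hom Z X') (w2 : Hom X' (S Y))
         (Y' : C) (u3 : Hom Z Y') (w3 : Hom Y' (S X)),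
         D (MkTri f u1 w1) -> D (MkTri g u2 w2) -> D (MkTri (comp g f) u3 w3) ->
         exists (a : Hom Z' Y') (b : Hom Y' X'),
           [/\ D (MkTri a b (comp (FH S u1) w2)),
               comp a u1 = comp u3 g, comp w3 a = w1,
               comp b u3 = u2 & comp w2 b = comp (FH S f) w3]).

Definition FullyFaithful : Prop :=
  forall A B : C, bijective (@FH C S A B).

Definition InEssImage (X : C) : Prop := exists A : C, Isomorphic X (S A).

Definition RightSemiEquivalence : Prop :=
  FullyFaithful /\
  (forall T, D T -> InEssImage (tA T) -> InEssImage (tC T) -> InEssImage (tB T)).

Definition IsAutoequivalence : Prop :=
  FullyFaithful /\ (forall X : C, InEssImage X).

End Triangulated.

(* The argument:
   - in an idempotent complete category an object is indecomposable iff it is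
     nonzero and its only idempotent endomorphisms are 0 and 1; a fully
     faithful additive functor induces isomorphisms of endomorphism rings, so
     Sigma (and every iterate Sigma^k) preserves indecomposables;
   - for indecomposable Y the objects Sigma^k Y, k = 0..N (N the number of
     isoclasses of indecomposables), cannot be pairwise non-isomorphic, so
     Sigma^i Y ~ Sigma^j Y with i < j; since Sigma reflects isomorphisms,
     Y ~ Sigma^(j-i) Y lies in the essential image of Sigma;
   - Sigma preserves zero objects and biproducts, so its essential image is
     closed under finite direct sums; as every object is a finite direct sum
     of indecomposables, Sigma is essentially surjective. *)
From Pilot Require Import Defs.
From mathcomp Require Import all_boot all_algebra.
From Stdlib Require List ClassicalEpsilon.
Set Implicit Arguments. Unset Strict Implicit. Unset Printing Implicit Defensive.
Import GRing.Theory.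
Local Open Scope ring_scope.
(* The names [Hom], [comp] and [compA] are also used by the libraries above. *)
Local Notation Hom := (@Defs.Hom _).
Local Notation comp := (@Defs.comp _ _ _ _).
Local Notation compA := Defs.compA.

Lemma double_eq0 (V : zmodType) (x : V) : x = x + x -> x = 0.
Proof. by move=> h; apply: (addrI x); rewrite addr0 -h. Qed.

Section Preadditive.
Variable C : PreaddCat.

Lemma comp0m (A B D : C) (f : Hom A B) : comp (0 : Hom B D) f = 0.
Proof. by apply: double_eq0; rewrite -compDl addr0. Qed.

Lemma compm0 (A B D : C) (g : Hom B D) : comp g (0 : Hom A B) = 0.
Proof. by apply: double_eq0; rewrite -compDr addr0. Qed.

Lemma compBl (A B D : C) (g g' : Hom B D) (f : Hom A B) :
  comp (g - g') f = comp g f - comp g' f.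
Proof. by apply: (addIr (comp g' f)); rewrite -compDl !subrK. Qed.

Lemma compBr (A B D : C) (g : Hom B D) (f f' : Hom A B) :
  comp g (f - f') = comp g f - comp g f'.
Proof. by apply: (addIr (comp g f')); rewrite -compDr !subrK. Qed.

Lemma compKl (A B Z : C) (f : Hom A B) (g : Hom B A) (x : Hom Z A) :
  comp g f = idm A -> comp g (comp f x) = x.
Proof. by move=> gf; rewrite compA gf comp1m. Qed.

Lemma compK0 (A B D Z : C) (f : Hom A B) (g : Hom B D) (x : Hom Z A) :
  comp g f = 0 -> comp g (comp f x) = 0.
Proof. by move=> gf; rewrite compA gf comp0m. Qed.

Lemma idm_zero (X : C) : idm X = 0 -> IsZero X.
Proof. by move=> e f; rewrite -(compm1 f) e compm0. Qed.

Lemma zero_isomorphic (Z Z' : C) : IsZero Z -> IsZero Z' -> Isomorphic Z Z'.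
Proof. by move=> hZ hZ'; exists 0, 0; rewrite !comp0m (hZ (idm Z)) (hZ' (idm Z')). Qed.

Lemma iso_sym (A B : C) : Isomorphic A B -> Isomorphic B A.
Proof. by case=> f [g [h1 h2]]; exists g, f. Qed.

Lemma iso_trans (A B D : C) : Isomorphic A B -> Isomorphic B D -> Isomorphic A D.
Proof.
case=> f [g [gf fg]] [f' [g' [gf' fg']]].
by exists (comp f' f), (comp g g'); split; rewrite -compA (compKl _ gf', compKl _ fg).
Qed.

Lemma biprod_isomorphic (A X B A' X' B' : C)
    (p1 : Hom A X) (p2 : Hom A B) (i1 : Hom X A) (i2 : Hom B A)
    (q1 : Hom A' X') (q2 : Hom A' B') (j1 : Hom X' A') (j2 : Hom B' A') :
  IsBiprod p1 p2 i1 i2 -> IsBiprod q1 q2 j1 j2 ->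
  Isomorphic X X' -> Isomorphic B B' -> Isomorphic A A'.
Proof.
case=> p1i1 p2i2 p1i2 p2i1 sum_i [q1j1 q2j2 q1j2 q2j1 sum_j].
case=> u [u' [u'u uu']] [v [v' [v'v vv']]].
exists (comp j1 (comp u p1) + comp j2 (comp v p2)).
exists (comp i1 (comp u' q1) + comp i2 (comp v' q2)).
split; rewrite !compDl !compDr -!compA.
- rewrite (compKl _ q1j1) (compKl _ q2j2) (compK0 _ q1j2) (compK0 _ q2j1).
  by rewrite !compm0 addr0 add0r (compKl _ u'u) (compKl _ v'v).
- rewrite (compKl _ p1i1) (compKl _ p2i2) (compK0 _ p1i2) (compK0 _ p2i1).
  by rewrite !compm0 addr0 add0r (compKl _ uu') (compKl _ vv').
Qed.

Section Biproducts.
Variables (A B D : C) (p1 : Hom A B) (p2 : Hom A D) (i1 : Hom B A) (i2 : Hom D A).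
Hypothesis bp : IsBiprod p1 p2 i1 i2.

Lemma biprod_sym : IsBiprod p2 p1 i2 i1.
Proof. by case: bp => *; split => //; rewrite addrC. Qed.

Lemma biprod_zeroP : IsZero B <-> comp i1 p1 = 0.
Proof.
case: bp => p1i1 _ _ _ _; split=> [zB | i1p1].
  by rewrite -(compm1 i1) (zB (idm B)) compm0 comp0m.
apply: idm_zero; rewrite -p1i1 -{1}(compKl (comp p1 i1) p1i1).
by rewrite (compA i1) i1p1 comp0m compm0.
Qed.

Lemma biprod_compl : comp i2 p2 = idm A - comp i1 p1.
Proof. by case: bp => _ _ _ _ <-; rewrite addrAC subrr add0r. Qed.

End Biproducts.

Lemma idempotent_biprod (A : C) (e : Hom A A) :
  IdempotentComplete C -> comp e e = e ->
  exists (B1 B2 : C) (r1 : Hom A B1) (r2 : Hom A B2) (s1 : Hom B1 A) (s2 : Hom B2 A),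
    IsBiprod r1 r2 s1 s2 /\ comp s1 r1 = e.
Proof.
move=> hIC ee.
have ff : comp (idm A - e) (idm A - e) = idm A - e.
  by rewrite compBl !compBr !comp1m compm1 ee subrr subr0.
have [B1 [r1 [s1 [r1s1 s1r1]]]] := hIC A e ee.
have [B2 [r2 [s2 [r2s2 s2r2]]]] := hIC A _ ff.
have r1e : comp r1 e = r1 by rewrite -s1r1 compA r1s1 comp1m.
have fs2 : comp (idm A - e) s2 = s2 by rewrite -s2r2 -compA r2s2 compm1.
have r2f : comp r2 (idm A - e) = r2 by rewrite -s2r2 compA r2s2 comp1m.
have es1 : comp e s1 = s1 by rewrite -s1r1 -compA r1s1 compm1.
exists B1, B2, r1, r2, s1, s2; split=> //; split=> //.
- by rewrite -r1e -fs2 -compA (compA e) compBr compm1 ee subrr comp0m compm0.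
- by rewrite -r2f -es1 -compA (compA _ e) compBl comp1m ee subrr comp0m compm0.
- by rewrite s1r1 s2r2 addrC subrK.
Qed.

End Preadditive.

Section Indecomposables.
Variable C : PreaddCat.

Lemma indecomposable_idempotent (A : C) (e : Hom A A) :
  IdempotentComplete C -> Indecomposable A -> comp e e = e ->
  e = 0 \/ e = idm A.
Proof.
move=> hIC [_ indA] ee.
have [B1 [B2 [r1 [r2 [s1 [s2 [bp <-]]]]]]] := idempotent_biprod hIC ee.
case: (indA _ _ _ _ _ _ bp) => [/(biprod_zeroP bp) | /(biprod_zeroP (biprod_sym bp))].
  by left.
by rewrite (biprod_compl bp) => /eqP; rewrite subr_eq0 => /eqP; right.
Qed.

Lemma trivial_idempotents_indecomposable (A : C) :
  ~ IsZero A -> (forall e : Hom A A, comp e e = e -> e = 0 \/ e = idm A) ->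
  Indecomposable A.
Proof.
move=> nzA triv; split=> // B D p1 p2 i1 i2 bp.
have [p1i1 _ _ _ _] := bp.
have ee : comp (comp i1 p1) (comp i1 p1) = comp i1 p1 by rewrite -compA (compKl _ p1i1).
case: (triv _ ee) => [/(biprod_zeroP bp) | e1]; first by left.
by right; apply/(biprod_zeroP (biprod_sym bp)); rewrite (biprod_compl bp) e1 subrr.
Qed.

End Indecomposables.

Lemma iso_pigeonhole (C : PreaddCat) (l : seq C) (F : nat -> C) :
  (forall k, exists2 X, List.In X l & Isomorphic (F k) X) ->
  exists i j, (i < j)%N /\ Isomorphic (F i) (F j).
Proof.
move=> hF; pose N := List.length l.
have [g hg] : exists g : 'I_N.+1 -> 'I_N,
    forall k : 'I_N.+1, Isomorphic (F k) (List.nth (g k) l (F 0%N)).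
  apply: (ClassicalEpsilon.choice
    (fun (k : 'I_N.+1) (m : 'I_N) => Isomorphic (F k) (List.nth m l (F 0%N)))) => k.
  have [X inX isoX] := hF k.
  have [m [/ltP lt_mN nth_mX]] := List.In_nth l X (F 0%N) inX.
  by exists (Ordinal lt_mN); rewrite nth_mX.
have : ~~ injectiveb g.
  by apply/injectiveP => /leq_card; rewrite !card_ord ltnn.
case/injectivePn => x [y neq_xy eq_g].
have iso_xy : Isomorphic (F x) (F y).
  by apply: iso_trans (hg x) _; rewrite eq_g; apply: iso_sym.
case: (ltngtP x y) => [lt_xy | lt_yx | /val_inj eq_xy].
- by exists x, y.
- by exists y, x; split=> //; apply: iso_sym.
- by rewrite eq_xy eqxx in neq_xy.
Qed.

Section AdditiveFunctor.
Variables (C : PreaddCat) (S : AddEndo C).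

Lemma FH0 (A B : C) : FH S (0 : Hom A B) = 0.
Proof. by apply: double_eq0; rewrite -FH_add addr0. Qed.

Lemma zero_S (Z : C) : IsZero Z -> IsZero (S Z).
Proof. by move=> zZ; apply: idm_zero; rewrite -FH_id (zZ (idm Z)) FH0. Qed.

Lemma biprod_S (A X B : C) (p1 : Hom A X) (p2 : Hom A B) (i1 : Hom X A) (i2 : Hom B A) :
  IsBiprod p1 p2 i1 i2 -> IsBiprod (FH S p1) (FH S p2) (FH S i1) (FH S i2).
Proof.
by case=> p1i1 p2i2 p1i2 p2i1 sum_i; split;
  rewrite -!FH_comp -?FH_add ?p1i1 ?p2i2 ?p1i2 ?p2i1 ?sum_i ?FH_id ?FH0.
Qed.

Lemma ess_image_biprod (A X B : C)
    (p1 : Hom A X) (p2 : Hom A B) (i1 : Hom X A) (i2 : Hom B A) :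
  IsAdditive C -> IsBiprod p1 p2 i1 i2 ->
  InEssImage S X -> InEssImage S B -> InEssImage S A.
Proof.
move=> [_ hbp] bp [X' isoX] [B' isoB].
have [A' [q1 [q2 [j1 [j2 bq]]]]] := hbp X' B'.
by exists A'; apply: biprod_isomorphic bp (biprod_S bq) isoX isoB.
Qed.

Lemma ess_image_direct_sum (l : seq C) (A : C) :
  IsAdditive C -> IsDirectSum l A ->
  (forall X, List.In X l -> InEssImage S X) -> InEssImage S A.
Proof.
move=> addC; elim: l A => [|X l IH] A /=.
  have [[Z zZ] _] := addC.
  by move=> zA _; exists Z; apply: zero_isomorphic (zero_S zZ).
move=> [B [p1 [p2 [i1 [i2 [bp sumB]]]]]] ess_l.
apply: ess_image_biprod addC bp (ess_l X (or_introl erefl)) _.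
by apply: IH sumB _ => Y inY; apply: ess_l; right.
Qed.

Section FullyFaithful.
Hypothesis hFF : FullyFaithful S.

Lemma FH_inj (A B : C) : injective (@FH C S A B).
Proof. exact: bij_inj (hFF A B). Qed.

Lemma FH_surj (A B : C) (g : Hom (S A) (S B)) : exists f, FH S f = g.
Proof. by case: (hFF A B) => h _ hK; exists (h g). Qed.

Lemma iso_reflect (A B : C) : Isomorphic (S A) (S B) -> Isomorphic A B.
Proof.
case=> f [g]; have [f' <-] := FH_surj f; have [g' <-] := FH_surj g.
by case=> gf fg; exists f', g'; split; apply: FH_inj; rewrite FH_comp FH_id.
Qed.

Lemma iso_reflect_iter (k : nat) (A B : C) :
  Isomorphic (iter k S A) (iter k S B) -> Isomorphic A B.
Proof. by elim: k => [|k IH] //= /iso_reflect /IH. Qed.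

(* Over an idempotent complete category, S induces a bijection on
   idempotents that preserves 0 and 1, hence preserves indecomposability. *)
Hypothesis hIC : IdempotentComplete C.

Lemma indecomposable_S (A : C) : Indecomposable A -> Indecomposable (S A).
Proof.
move=> indA; apply: trivial_idempotents_indecomposable.
  move=> zSA; case: indA => nzA _; apply/nzA/idm_zero/FH_inj.
  by rewrite FH_id FH0 (zSA (idm (S A))).
move=> e; have [e' <-] := FH_surj e; rewrite -FH_comp => /FH_inj e'e'.
by case: (indecomposable_idempotent hIC indA e'e') => ->; [left; rewrite FH0 | right; rewrite FH_id].
Qed.

Lemma indecomposable_iter (k : nat) (A : C) :
  Indecomposable A -> Indecomposable (iter k S A).
Proof. by elim: k => [|k IH] //= /IH /indecomposable_S. Qed.

(* If the indecomposables fall into finitely many isomorphism classes, every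
   indecomposable Y lies in the essential image: two of the indecomposables
   Y, S Y, S^2 Y, ... are isomorphic, say S^i Y ~ S^j Y with i < j, and
   reflecting along S^i gives Y ~ S^(j-i) Y. *)
Lemma indecomposable_in_ess_image (l : seq C) :
  (forall A, Indecomposable A -> exists2 X, List.In X l & Isomorphic A X) ->
  forall Y, Indecomposable Y -> InEssImage S Y.
Proof.
move=> finite_l Y indY.
have [i [j [lt_ij iso_ij]]] :=
  iso_pigeonhole (fun k => finite_l _ (indecomposable_iter k indY)).
rewrite -(subnKC (ltnW lt_ij)) iterD in iso_ij.
have := iso_reflect_iter iso_ij.
have pos_ji : (0 < j - i)%N by rewrite subn_gt0.
by rewrite -(prednK pos_ji) iterS => isoY; exists (iter (j - i).-1 S Y).
Qed.

End FullyFaithful.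
End AdditiveFunctor.

Theorem mainTheorem13 (C : PreaddCat) (S : AddEndo C) (D : Tri S -> Prop) :
  IsAdditive C ->
  RightTriangulated D ->
  RightSemiEquivalence D ->
  IdempotentComplete C ->
  AdditivelyFinite C ->
  IsAutoequivalence S.
Proof.
move=> addC _ [hFF _] hIC [[l finite_l] decomp]; split=> // X.
have [ls [ind_ls sum_X]] := decomp X.
apply: (ess_image_direct_sum addC sum_X) => Y inY.
exact (indecomposable_in_ess_image hFF hIC finite_l (ind_ls Y inY)).
Qed.
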